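(* For every $x\in\Delta\setminus\partial\Delta$, $\nabla H\cdot F(x)=p(x)\ge0$, where $p(x)=\sum_{i,j,k\in\mathbb{V}:\,x_{ij},x_{ik}>0}\frac{x_{ij}x_{ik}}{x_i}(y_{ij}-y_{ik})^2$. In particular $H$ is a Lyapunov function on $\Delta\setminus\partial\Delta$ for the ODE $\dot x=F(x)$.
   Context: Let $G=(\mathbb{V},E)$ be a finite graph with adjacency $\sim$. Let $a_{ij}=a_{ji}\ge0$ ($>0$ only if $i\sim j$) and $p_{ij}=p_{ji}\in[0,1]$ ($=0$ if $i\not\sim j$), with some $a_{ij}p_{ij}>0$. Fix $h_1\in(0,1]$; $\Delta$ is the set of arrays $x=(x_{ij})_{i,j\in\mathbb{V}}$ with $x_{ij}=x_{ji}\ge0$, $x_{ij}=0$ if $i\not\sim j$, $\sum_{i,j}x_{ij}=1$, $\sum_{(i,j):a_{ij}p_{ij}>0}x_{ij}\ge h_1$; $x_i=\sum_jx_{ij}$. $\partial\Delta$: the $x\in\Delta$ such that some vertex $i$ having a neighbour $j$ with $a_{ij}p_{ij}>0$ has $\sum_{j:a_{ij}p_{ij}>0}x_{ij}=0$. $H(x)=\sum_{(i,j):x_{ij}>0}a_{ij}p_{ij}x_{ij}^2/(x_ix_j)$; $y_{ij}=a_{ij}p_{ij}x_{ij}/(x_ix_j)$ (weighted efficiency; $0$ if $a_{ij}p_{ij}=0$); $F(x)_{ij}=x_{ij}(y_{ij}-H(x))$ ($0$ if $x_{ij}=0$). Here $\nabla H=(\partial H/\partial x_{ij})_{i,j}$,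 where $H$ is regarded as a function of the variables $x_{ij}$ indexed by ordered pairs, $x_{ij}$ and $x_{ji}$ being treated as independent variables, with $x_i=\sum_jx_{ij}$; $\nabla H\cdot F=\sum_{i,j}\frac{\partial H}{\partial x_{ij}}F_{ij}$. *)

From HB Require Import structures.
From mathcomp Require Import all_boot all_order all_algebra.
From mathcomp Require Import all_classical all_reals all_analysis.
Set Implicit Arguments. Unset Strict Implicit. Unset Printing Implicit Defensive.
Import Order.TTheory GRing.Theory Num.Theory.
Local Open Scope ring_scope.

Section Defs.
Variables (R : realType) (V : finType).
Implicit Types (x a p : V -> V -> R) (adj : rel V).

Definition wgt a p i j : R := a i j * p i j.

Definition xv x i : R := \sum_(j : V) x i j.

Definition inDelta adj a p (h1 : R) x : Prop :=
  [/\ (forall i j, x i j = x j i),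
      (forall i j, 0 <= x i j),
      (forall i j, ~~ adj i j -> x i j = 0),
      \sum_(i : V) \sum_(j : V) x i j = 1
    & h1 <= \sum_(i : V) \sum_(j : V | 0 < wgt a p i j) x i j].

Definition inBoundary a p x : Prop :=
  exists i, (exists j, 0 < wgt a p i j) /\
            \sum_(j : V | 0 < wgt a p i j) x i j = 0.

Definition Hfun a p x : R :=
  \sum_(i : V) \sum_(j : V | 0 < x i j)
     wgt a p i j * x i j ^+ 2 / (xv x i * xv x j).

Definition yfun a p x i j : R :=
  if 0 < wgt a p i j then wgt a p i j * x i j / (xv x i * xv x j) else 0.

Definition Ffun a p x i j : R :=
  if x i j == 0 then 0 else x i j * (yfun a p x i j - Hfun a p x).

(* x with the single (ordered) coordinate (i,j) replaced by t;
   x_ij and x_ji are independent variables *)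
Definition upd x i j (t : R) : V -> V -> R :=
  fun k l => if (k == i) && (l == j) then t else x k l.

Definition dHdx a p x i j : R :=
  derive1 (fun t : R => Hfun a p (upd x i j t)) (x i j).

Definition gradH_dot_F a p x : R :=
  \sum_(i : V) \sum_(j : V) dHdx a p x i j * Ffun a p x i j.

Definition pfun a p x : R :=
  \sum_(i : V) \sum_(j : V) \sum_(k : V | (0 < x i j) && (0 < x i k))
     x i j * x i k / xv x i * (yfun a p x i j - yfun a p x i k) ^+ 2.

End Defs.

From HB Require Import structures.
From mathcomp Require Import all_boot all_order all_algebra.
From mathcomp Require Import all_classical all_reals all_analysis.
From mathcomp Require Import ring.
Import Order.TTheory GRing.Theory Num.Theory.
Set Implicit Arguments. Unset Strict Implicit. Unset Printing Implicit Defensive.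
Local Open Scope ring_scope.

(* Where x_ij > 0 the support of H is locally constant, and since x_ij enters H
   through x_ij, x_i and (by the symmetry of x) once more through x_i, the
   partial derivative is dH/dx_ij = 2 (y_ij - m_i), with m_i = sum_l x_il y_il / x_i
   the x-weighted mean of the i-th row of y.  Row by row, grad H . F then becomes
   sum_j x_ij (y_ij - H) 2 (y_ij - m_i) = 2 sum_j x_ij (y_ij - m_i)^2, the constant
   H dropping out because weighted deviations from the mean sum to zero; written
   pairwise, this weighted variance is the i-th row of p(x). *)

Section Derivatives.
Variables (R : realType) (U W : normedModType R).

Lemma is_derive_bigsum (I : finType) (P : pred I) (h : I -> U -> W) (u v : U)
    (dh : I -> W) :
  (forall i, P i -> is_derive u v (h i) (dh i)) ->
  is_derive u v (fun t => \sum_(i | P i) h i t) (\sum_(i | P i) dh i).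
Proof.
move=> dhi; rewrite -fct_sumE.
elim/big_rec2: _ => [|i f d Pi IH]; first exact: is_derive_cst.
exact: is_deriveD (dhi i Pi) IH.
Qed.

End Derivatives.

Lemma is_derive_sqr_div (R : realType) (u A B : R -> R) (t du dA dB c : R) :
  is_derive t 1 u du -> is_derive t 1 A dA -> is_derive t 1 B dB ->
  A t != 0 -> B t != 0 ->
  is_derive t 1 (fun s => c * u s ^+ 2 / (A s * B s))
    (c * (2 * u t * du / (A t * B t)
          - u t ^+ 2 * (dA * B t + A t * dB) / (A t * B t) ^+ 2)).
Proof.
move=> du_t dA_t dB_t At0 Bt0.
have ABt0 : (A * B) t != 0 by rewrite mulf_neq0.
have := is_deriveM (is_deriveZ c (is_deriveX 2 du_t))
                   (is_deriveV ABt0 (is_deriveM dA_t dB_t)).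
have -> : (c *: u ^+ 2) * (fun s => ((A * B) s)^-1) =
          (fun s => c * u s ^+ 2 / (A s * B s)) by [].
move/is_derive_eq; apply.
have scaleE (r s : R) : r *: s = r * s by [].
rewrite (_ : (c \*: u ^+ 2) t = c * u t ^+ 2) // -[(A * B) t]/(A t * B t) !scaleE.
field; by rewrite At0 Bt0.
Qed.

Section WeightedVariance.
Variables (R : realType) (I : finType) (w y : I -> R).
Hypothesis w_ge0 : forall j, 0 <= w j.

Lemma weighted_pair_variance (c : R) :
  \sum_j w j * (y j - c) * (2 * y j - 2 * (\sum_l w l * y l) / \sum_l w l)
  = \sum_j \sum_k w j * w k / (\sum_l w l) * (y j - y k) ^+ 2.
Proof.
have [X0|X0] := eqVneq (\sum_l w l) 0.
  have w0 := psumr_eq0P (fun j _ => w_ge0 j) X0.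
  rewrite [LHS]big1 => [|j _]; last by rewrite w0 // !mul0r.
  by rewrite big1 // => j _; rewrite big1 // => k _; rewrite w0 // !mul0r.
set X := \sum_l w l; set S := \sum_l w l * y l; set Q := \sum_l w l * y l ^+ 2.
transitivity (2 * Q - 2 * S ^+ 2 / X).
  have -> : \sum_j w j * (y j - c) * (2 * y j - 2 * S / X) =
      \sum_j (2 * (w j * y j ^+ 2) + (- 2 * (S / X + c)) * (w j * y j)
              + 2 * c * S / X * w j).
    by apply: eq_bigr => j _; ring.
  rewrite !big_split /= -!mulr_sumr -/S -/Q -/X; field.
  exact: X0.
have -> : \sum_j \sum_k w j * w k / X * (y j - y k) ^+ 2 =
    \sum_j (X^-1 * (w j * y j ^+ 2) * X + (- 2 * X^-1 * (w j * y j)) * S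
            + X^-1 * w j * Q).
  apply: eq_bigr => j _.
  rewrite /X /S /Q !mulr_sumr -!big_split /=; apply: eq_bigr => k _; ring.
rewrite !big_split /= -!mulr_suml -!mulr_sumr -/S -/Q -/X; field.
exact: X0.
Qed.

End WeightedVariance.

Section GradientOfH.
Variables (R : realType) (V : finType).
Implicit Types (x a p : V -> V -> R).

Definition eff a p x k l : R := wgt a p k l * x k l / (xv x k * xv x l).

Lemma yfunE a p x k l : 0 <= wgt a p k l -> yfun a p x k l = eff a p x k l.
Proof.
rewrite /yfun /eff le_eqVlt => /orP[/eqP <-|->] //.
by rewrite ltxx !mul0r.
Qed.

Lemma eff_sym a p x k l :
  (forall i j, a i j = a j i) -> (forall i j, p i j = p j i) ->
  (forall i j, x i j = x j i) -> eff a p x k l = eff a p x l k.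
Proof.
by move=> a_sym p_sym x_sym; rewrite /eff /wgt a_sym p_sym x_sym [_ * xv x l]mulrC.
Qed.

Lemma upd_id x i j : upd x i j (x i j) = x.
Proof.
apply/funext => k; apply/funext => l; rewrite /upd.
by case: ifP => // /andP[/eqP -> /eqP ->].
Qed.

Lemma is_derive_upd x i j k l (t : R) :
  is_derive t 1 (fun s => upd x i j s k l) (if (k == i) && (l == j) then 1 else 0).
Proof. by rewrite /upd; case: ifP => _; [exact: is_derive_id | exact: is_derive_cst]. Qed.

Lemma is_derive_xv_upd x i j k (t : R) :
  is_derive t 1 (fun s => xv (upd x i j s) k) (if k == i then 1 else 0).
Proof.
have -> : (if k == i then 1 else 0) =
          \sum_(l : V) (if (k == i) && (l == j) then 1 else 0 : R).
  by case: (k == i); [rewrite -big_mkcond big_pred1_eq | rewrite big1].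
exact: is_derive_bigsum (fun l _ => is_derive_upd x i j k l t).
Qed.

Lemma xv_gt0 x k l : (forall i j, 0 <= x i j) -> 0 < x k l -> 0 < xv x k.
Proof.
move=> x_ge0 xkl; apply: (lt_le_trans xkl).
by rewrite /xv (bigD1 l) //= lerDl sumr_ge0.
Qed.

(* [x_ij] enters the [(k,l)] summand of [H] through [x_kl], [x_k] and [x_l]. *)
Definition dHsummand a p x (i j k l : V) : R :=
  (if (k == i) && (l == j) then 2 * eff a p x k l else 0)
  - (if k == i then x k l * eff a p x k l / xv x k else 0)
  - (if l == i then x k l * eff a p x k l / xv x l else 0).

Section PositiveEntry.
Variables (a p x : V -> V -> R) (i j : V).
Hypotheses (x_ge0 : forall k l, 0 <= x k l) (x_sym : forall k l, x k l = x l k).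
Hypothesis xij_gt0 : 0 < x i j.

Lemma dHdx_sum :
  dHdx a p x i j = \sum_(k : V) \sum_(l : V | 0 < x k l) dHsummand a p x i j k l.
Proof.
pose G t := \sum_(k : V) \sum_(l : V | 0 < x k l)
   wgt a p k l * upd x i j t k l ^+ 2 / (xv (upd x i j t) k * xv (upd x i j t) l).
rewrite /dHdx derive1E (@near_eq_derive _ _ _ _ G); last first.
  (* the support of [H] does not move while [x_ij] stays positive *)
  near=> t; have t_gt0 : 0 < t by near: t; exact: lt_nbhsr.
  apply: eq_bigr => k _; apply: eq_bigl => l; rewrite /upd.
  by case: ifP => // /andP[/eqP -> /eqP ->]; rewrite t_gt0 xij_gt0.
apply: derive_val; apply: is_derive_bigsum => k _; apply: is_derive_bigsum => l xkl.
have xk_neq0 : xv x k != 0 by rewrite gt_eqF // (xv_gt0 x_ge0 xkl).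
have xl_neq0 : xv x l != 0 by rewrite gt_eqF // (@xv_gt0 x l k) // -x_sym.
have := is_derive_sqr_div (wgt a p k l) (is_derive_upd x i j k l (x i j))
  (is_derive_xv_upd x i j k (x i j)) (is_derive_xv_upd x i j l (x i j)).
rewrite !upd_id => /(_ xk_neq0 xl_neq0) /is_derive_eq; apply.
rewrite /dHsummand /eff.
by case: (k == i); case: (l == j); case: (l == i) => /=; field; rewrite xk_neq0 xl_neq0.
Unshelve. all: by end_near.
Qed.

Lemma sum_dHsummand :
  (forall k l, a k l = a l k) -> (forall k l, p k l = p l k) ->
  \sum_(k : V) \sum_(l : V | 0 < x k l) dHsummand a p x i j k l =
  2 * eff a p x i j - 2 * (\sum_(l : V) x i l * eff a p x i l) / xv x i.
Proof.
move=> a_sym p_sym.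
have drop_support k :
    \sum_(l : V | 0 < x k l) dHsummand a p x i j k l = \sum_l dHsummand a p x i j k l.
  rewrite big_mkcond; apply: eq_bigr => l _; case: ifP => // /negbT.
  rewrite lt0r x_ge0 andbT negbK => /eqP xkl0.
  by rewrite /dHsummand /eff xkl0 !(mulr0, mul0r) !if_same !subr0.
have sum_if_eq (F : V -> R) (m : V) : \sum_k (if k == m then F k else 0) = F m.
  by rewrite -big_mkcond big_pred1_eq.
rewrite (eq_bigr _ (fun k _ => drop_support k)) /dHsummand.
under eq_bigr => k _ do rewrite !sumrB.
rewrite !sumrB.
have -> : \sum_k \sum_l (if (k == i) && (l == j) then 2 * eff a p x k l else 0) =
          2 * eff a p x i j.
  rewrite -(sum_if_eq (fun k => 2 * eff a p x k j) i); apply: eq_bigr => k _.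
  by case: (k == i); [rewrite (sum_if_eq (fun l => 2 * eff a p x k l)) | rewrite big1].
have -> : \sum_k \sum_l (if k == i then x k l * eff a p x k l / xv x k else 0) =
          \sum_l x i l * eff a p x i l / xv x i.
  rewrite -(sum_if_eq (fun k => \sum_l x k l * eff a p x k l / xv x k) i).
  by apply: eq_bigr => k _; case: (k == i); rewrite // big1.
have -> : \sum_k \sum_l (if l == i then x k l * eff a p x k l / xv x l else 0) =
          \sum_l x i l * eff a p x i l / xv x i.
  apply: eq_bigr => k _; rewrite (sum_if_eq (fun l => x k l * eff a p x k l / xv x l)).
  by rewrite x_sym eff_sym.
by rewrite -mulr_suml; ring.
Qed.

End PositiveEntry.

Section Rows.
Variables (a p x : V -> V -> R).
Hypotheses (a_sym : forall k l, a k l = a l k) (p_sym : forall k l, p k l = p l k).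
Hypothesis wgt_ge0 : forall k l, 0 <= wgt a p k l.
Hypotheses (x_ge0 : forall k l, 0 <= x k l) (x_sym : forall k l, x k l = x l k).

Lemma gradH_dot_F_rows :
  gradH_dot_F a p x = \sum_i \sum_j x i j * (eff a p x i j - Hfun a p x) *
    (2 * eff a p x i j - 2 * (\sum_l x i l * eff a p x i l) / xv x i).
Proof.
apply: eq_bigr => i _; apply: eq_bigr => j _; rewrite /Ffun.
have [->|xij_neq0] := eqVneq (x i j) 0; first by rewrite mulr0 !mul0r.
have xij_gt0 : 0 < x i j by rewrite lt0r xij_neq0 x_ge0.
by rewrite dHdx_sum // sum_dHsummand // yfunE // mulrC mulrA.
Qed.

Lemma pfunE : pfun a p x =
  \sum_i \sum_j \sum_k x i j * x i k / xv x i * (eff a p x i j - eff a p x i k) ^+ 2.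
Proof.
apply: eq_bigr => i _; apply: eq_bigr => j _; rewrite big_mkcond.
apply: eq_bigr => k _; rewrite !yfunE //; case: ifP => // /negbT.
by rewrite negb_and !lt0r !x_ge0 !andbT !negbK => /orP[] /eqP ->; rewrite !(mul0r, mulr0).
Qed.

End Rows.

Lemma pfun_ge0 a p x : (forall k l, 0 <= x k l) -> 0 <= pfun a p x.
Proof.
move=> x_ge0; do 3!(apply: sumr_ge0 => ? _).
by rewrite mulr_ge0 ?sqr_ge0 // divr_ge0 ?mulr_ge0 // sumr_ge0.
Qed.

End GradientOfH.

Theorem proposition2 (R : realType) (V : finType) (adj : rel V)
    (a p : V -> V -> R) (h1 : R) :
  symmetric adj ->
  (forall i j, a i j = a j i) ->
  (forall i j, 0 <= a i j) ->
  (forall i j, 0 < a i j -> adj i j) ->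
  (forall i j, p i j = p j i) ->
  (forall i j, 0 <= p i j <= 1) ->
  (forall i j, ~~ adj i j -> p i j = 0) ->
  (exists i j, 0 < wgt a p i j) ->
  0 < h1 <= 1 ->
  forall x : V -> V -> R,
    inDelta adj a p h1 x -> ~ inBoundary a p x ->
    gradH_dot_F a p x = pfun a p x /\ 0 <= pfun a p x.
Proof.
move=> _ a_sym a_ge0 _ p_sym p_bnd _ _ _ x [x_sym x_ge0 _ _ _] _.
have wgt_ge0 k l : 0 <= wgt a p k l.
  by rewrite mulr_ge0 //; case/andP: (p_bnd k l).
split; last exact: pfun_ge0.
rewrite gradH_dot_F_rows // pfunE //; apply: eq_bigr => i _.
exact: weighted_pair_variance.
Qed.
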